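(* Let $a=b=p$ and $0\le c<p$, and let $r\ge p/2$. Then the optimal DMT of the half-duplex $(a,b,c)$-relay channel, even when the relay has global CSI, is at most $(p+c-2r)^+$, which equals the DMT $d_{QMF}(r)$ achieved by static QMF with equal listening and transmitting times. Consequently static QMF is DMT optimal for $r\ge p/2$ (under global CSI, and hence also under CSIR only).
   Context: The $(a,b,c)$-relay channel: source $S$, half-duplex relay $R$, destination $D$; source signal broadcast to $R$ and $D$, superposition at $D$; i.i.d. $\mathcal{CN}(0,1)$ quasi-static gains; average SNRs $\rho^a,\rho^b,\rho^c$ on S-R, R-D, S-D. Exponential orders $\alpha,\beta,\gamma$ of $|h_{sr}|^2\rho^a,|h_{rd}|^2\rho^b,|h_{sd}|^2\rho^c$ (e.g. $\alpha=\lim_{\rho\to\infty}\log(1+|h_{sr}|^2\rho^a)/\log\rho$). Let $r_{h.d.}(t)=\min\{t\max(\alpha,\gamma)+(1-t)\gamma,\ t\gamma+(1-t)\max(\beta,\gamma)\}$. The global-CSI DMT satisfies $d_{G\text{-}CSI}(r)\le\inf\{a+b+c-\alpha-\beta-\gamma:\max_{t\in[0,1]}r_{h.d.}(t)\le r,\ \alpha\in[0,a],\beta\in[0,b],\gamma\in[0,c]\}$. Static QMF: the relay listens for half the block, quantizes at noise level, maps to a random codeword and transmits in the other half; its DMT is $d_{QMF}(r)=\min\{a+b+c-\alpha-\beta-\gamma: r_{h.d.}(1/2)\le r,\ \alpha\in[0,a],\beta\in[0,b],\gamma\in[0,c]\}$, which for $c\le\min(a,b)$ equals $(\min(a,b)+c-2r)^+$.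 $x^+=\max(x,0)$. *)

From Stdlib Require Import Reals Lra.
Open Scope R_scope.

Definition pos_part (x : R) : R := Rmax x 0.

(* r_{h.d.}(t) for exponential orders alpha, beta, gamma *)
Definition r_hd (al be ga t : R) : R :=
  Rmin (t * Rmax al ga + (1 - t) * ga) (t * ga + (1 - t) * Rmax be ga).

(* Feasible triples for the global-CSI outage bound:
   max_{t in [0,1]} r_hd(t) <= r, alpha in [0,a], beta in [0,b], gamma in [0,c].
   (max_t f(t) <= r is written out as: forall t in [0,1], f t <= r.) *)
Definition gcsi_feasible (a b c r al be ga : R) : Prop :=
  (forall t, 0 <= t <= 1 -> r_hd al be ga t <= r) /\
  0 <= al <= a /\ 0 <= be <= b /\ 0 <= ga <= c.

Definition qmf_feasible (a b c r al be ga : R) : Prop :=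
  r_hd al be ga (1/2) <= r /\
  0 <= al <= a /\ 0 <= be <= b /\ 0 <= ga <= c.

Definition value_set (feas : R -> R -> R -> Prop) (a b c : R) (v : R) : Prop :=
  exists al be ga, feas al be ga /\ v = a + b + c - al - be - ga.

(* "inf S <= x": every lower bound of S is <= x *)
Definition inf_le (S : R -> Prop) (x : R) : Prop :=
  forall m, (forall v, S v -> m <= v) -> m <= x.

Definition is_min (S : R -> Prop) (x : R) : Prop :=
  S x /\ forall v, S v -> x <= v.

(* The global-CSI DMT upper bound: inf { a+b+c-al-be-ga : feasible } *)
Definition gcsi_bound_set (a b c r : R) : R -> Prop :=
  value_set (gcsi_feasible a b c r) a b c.

(* d_QMF(r) = min { a+b+c-al-be-ga : qmf feasible } *)
Definition qmf_set (a b c r : R) : R -> Prop :=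
  value_set (qmf_feasible a b c r) a b c.

From Stdlib Require Import Reals Lra.
Open Scope R_scope.

(* For a = b = p the extremal point of both optimisation
   problems is alpha = beta = p together with
     gamma* = min(c, 2r - p),
   whose value 2p + c - alpha - beta - gamma* = c - gamma* is exactly
   (p + c - 2r)^+.  This point is feasible for the global-CSI problem for
   every time-sharing t, because with alpha = beta >= gamma the two terms of
   r_hd average to (alpha + gamma)/2 <= r; as global-CSI feasibility implies
   QMF feasibility (take t = 1/2), it is QMF feasible too.  Conversely,
   r_hd(1/2) <= r forces alpha + gamma <= 2r or beta + gamma <= 2r, so every
   QMF value is at least p + c - 2r (and trivially at least 0). *)

Lemma member_inf_le (S : R -> Prop) (x : R) : S x -> inf_le S x.
Proof. intros Hx m Hm. exact (Hm x Hx). Qed.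

Lemma Rmin_le_average (A B : R) : Rmin A B <= (A + B) / 2.
Proof. pose proof (Rmin_l A B); pose proof (Rmin_r A B); lra. Qed.

Lemma r_hd_diag_le (x g t : R) : g <= x -> r_hd x x g t <= (x + g) / 2.
Proof.
  intros Hg. unfold r_hd. rewrite Rmax_left by lra.
  eapply Rle_trans; [apply Rmin_le_average | lra].
Qed.

Lemma r_hd_half_ge (al be ga : R) :
  Rmin ((al + ga) / 2) ((be + ga) / 2) <= r_hd al be ga (1 / 2).
Proof.
  unfold r_hd. pose proof (Rmax_l al ga). pose proof (Rmax_l be ga).
  pose proof (Rmin_l ((al + ga) / 2) ((be + ga) / 2)).
  pose proof (Rmin_r ((al + ga) / 2) ((be + ga) / 2)).
  apply Rmin_glb; lra.
Qed.

Lemma gcsi_feasible_qmf (a b c r al be ga : R) :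
  gcsi_feasible a b c r al be ga -> qmf_feasible a b c r al be ga.
Proof. intros [Ht Hrest]. split; [apply Ht; lra | exact Hrest]. Qed.

Definition gamma_star (c r p : R) : R := Rmin c (2 * r - p).

Lemma pos_part_gamma_star (p c r : R) :
  pos_part (p + c - 2 * r) = c - gamma_star c r p.
Proof.
  unfold pos_part, gamma_star.
  destruct (Rle_dec c (2 * r - p)).
  - rewrite Rmin_left, Rmax_right by lra. ring.
  - rewrite Rmin_right, Rmax_left by lra. ring.
Qed.

Lemma gamma_star_feasible (p c r : R) :
  0 <= c -> c < p -> p / 2 <= r -> gcsi_feasible p p c r p p (gamma_star c r p).
Proof.
  intros hc0 hcp hr. unfold gamma_star.
  pose proof (Rmin_l c (2 * r - p)). pose proof (Rmin_r c (2 * r - p)).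
  assert (0 <= Rmin c (2 * r - p)) by (apply Rmin_glb; lra).
  repeat split; try lra.
  intros t _. eapply Rle_trans; [apply r_hd_diag_le | ]; lra.
Qed.

Lemma gcsi_bound_set_pos_part (p c r : R) :
  0 <= c -> c < p -> p / 2 <= r ->
  gcsi_bound_set p p c r (pos_part (p + c - 2 * r)).
Proof.
  intros hc0 hcp hr. exists p, p, (gamma_star c r p). split.
  - apply gamma_star_feasible; assumption.
  - rewrite pos_part_gamma_star. ring.
Qed.

Lemma qmf_value_ge (p c r v : R) :
  qmf_set p p c r v -> pos_part (p + c - 2 * r) <= v.
Proof.
  intros [al [be [ga [[Hr [Hal [Hbe Hga]]] ->]]]].
  pose proof (Rle_trans _ _ _ (r_hd_half_ge al be ga) Hr) as Hmin.
  unfold pos_part. apply Rmax_lub; [| lra].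
  destruct (Rle_dec ((al + ga) / 2) ((be + ga) / 2)).
  - rewrite Rmin_left in Hmin by lra. lra.
  - rewrite Rmin_right in Hmin by lra. lra.
Qed.

Theorem lemma5 (p c r : R) (hc0 : 0 <= c) (hcp : c < p) (hr : p / 2 <= r) :
  (* the global-CSI upper bound  inf{...}  is at most (p+c-2r)^+ *)
  inf_le (gcsi_bound_set p p c r) (pos_part (p + c - 2 * r)) /\
  (* hence any d_{G-CSI}(r) below that infimum is at most (p+c-2r)^+ *)
  (forall dG : R, (forall v, gcsi_bound_set p p c r v -> dG <= v) ->
     dG <= pos_part (p + c - 2 * r)) /\
  (* and (p+c-2r)^+ is exactly d_QMF(r) *)
  is_min (qmf_set p p c r) (pos_part (p + c - 2 * r)).
Proof.
  pose proof (gcsi_bound_set_pos_part p c r hc0 hcp hr) as Hgcsi.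
  split; [| split].
  - apply member_inf_le, Hgcsi.
  - intros dG HdG. exact (member_inf_le _ _ Hgcsi dG HdG).
  - split.
    + destruct Hgcsi as [al [be [ga [Hfeas Hval]]]].
      exists al, be, ga. split; [apply gcsi_feasible_qmf |]; assumption.
    + intros v. apply qmf_value_ge.
Qed.
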